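(* Consider a system of $k$ parallel $M/M/1$ queues, each with finite capacity $C'$, arrival rate $\mu$ and service rate $\lambda$ per server, where arriving customers join a queue of currently shortest length and are turned away if all queues are full. Let $\epsilon_{n_1, \ldots, n_k}$ be the steady-state probability that there are $n_i$ people in queue $i$ for $i \in \{1, \ldots, k\}$, and let $\zeta_{m_0, m_1, \ldots, m_{C'}}$ be the steady-state probability that there are $m_j$ queues with exactly $j$ customers, for $j \in \{0, 1, \ldots, C'\}$, so that $$\epsilon_{n_1, \ldots, n_k} = \frac{1}{\binom{k}{m_0, \ldots, m_{C'}}} \zeta_{m_0, \ldots, m_{C'}}$$ if $m_j = \sum_{i = 1}^k \mathbf{1}\{n_i = j \}$ for all $j \in \{0, \ldots, C'\}$. Then the $\zeta$ steady-state probabilities satisfy $$\Big(\mathbf{1}\{m_{C'} < k\}\frac{\mu}{\lambda} + (k - m_0) \Big) \zeta_{m_0, m_1, \ldots, m_{C'}} = \sum_{i = 1}^{C'} (m_i + 1) \zeta_{m_0, \ldots, m_{i-2}, m_{i-1} - 1, m_i + 1, \ldots, m_{C'}} + \frac{\mu}{\lambda} \big[\zeta_{m_0 + 1, m_1 - 1, m_2, \ldots, m_{C'}} + \zeta_{0, m_1 + 1, m_2 - 1, \ldots, m_{C'}} + \cdots + \zeta_{0, \ldots, 0, m_{C'-1} + 1, m_{C'} - 1} \big],$$ with $\zeta_{m_0, \ldots, m_{C'}} = 0$ unless $\sum_{j = 0}^{C'} m_j = k$ and $m_j \in \{0, \ldots, k\}$ for all $j$.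
   Context: $\binom{k}{m_0,\ldots,m_{C'}}=\frac{k!}{m_0!\cdots m_{C'}!}$ is the multinomial coefficient. The capacity $C'$ of each queue includes the customer being served. Arrivals form a Poisson process of rate $\mu$; each server has exponential service times with rate $\lambda$. *)

From mathcomp Require Import all_boot all_order all_algebra.
Set Implicit Arguments. Unset Strict Implicit. Unset Printing Implicit Defensive.
Import Order.TTheory GRing.Theory Num.Theory.
Local Open Scope ring_scope.

Definition state (k C : nat) := {ffun 'I_k -> 'I_C.+1}.

Definition shortest (k C : nat) (n : state k C) (i : 'I_k) : bool :=
  [forall j, (n i <= n j)%N].

Definition nshort (k C : nat) (n : state k C) : nat :=
  #|[set i | shortest n i]|.

Definition is_upd (k C : nat) (n n' : state k C) (i : 'I_k) (d : int) : bool :=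
  [forall j, ((n' j : nat)%:Z == (n j : nat)%:Z + (if j == i then d else 0))].

(* transition rate from n to n' (n' <> n) of the CTMC:
   arrival to a shortest, non-full queue i at rate mu / #shortest
   (customers are turned away when all queues are full),
   departure from a nonempty queue i at rate lam. *)
Definition rate (R : numFieldType) (k C : nat) (mu lam : R) (n n' : state k C) : R :=
  \sum_(i < k)
     ((is_upd n n' i 1)%:R *
        (if shortest n i && (n i < C)%N then mu / (nshort n)%:R else 0)
    + (is_upd n n' i (-1))%:R * lam).

Definition jsq_stationary (R : numFieldType) (k C : nat) (mu lam : R)
    (eps : state k C -> R) : Prop :=
  (forall n, 0 <= eps n) /\ (\sum_n eps n = 1) /\
  (forall n, eps n * (\sum_(n' | n' != n) rate mu lam n n')
             = \sum_(n' | n' != n) eps n' * rate mu lam n' n).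

Definition occ (k C : nat) (n : state k C) (j : 'I_C.+1) : nat :=
  #|[set i | n i == j]|.

(* zeta_m = probability that there are m j queues with exactly j customers;
   indices are integers, so zeta_m = 0 automatically unless every m j is in
   0..k and they sum to k *)
Definition zeta (R : numFieldType) (k C : nat) (eps : state k C -> R)
    (m : 'I_C.+1 -> int) : R :=
  \sum_(n | [forall j, (occ n j)%:Z == m j]) eps n.

From mathcomp Require Import all_boot all_order all_algebra zify ring.
Set Implicit Arguments. Unset Strict Implicit. Unset Printing Implicit Defensive.
Import Order.TTheory GRing.Theory Num.Theory.
Local Open Scope ring_scope.

(* Sum the global balance equations over the class of states whose
   occupancy profile is m.  Every state of the class leaves at the same
   total rate: mu unless all queues are full, plus lam for each of the
   k - m_0 busy servers.  A state n' enters the class either by a departure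
   from a queue of length i, which requires profile m + e_i - e_(i-1) and can
   happen from any of its m_i + 1 queues of length i, or by an arrival at a
   shortest queue of length j, which requires profile m + e_j - e_(j+1) with
   all levels below j empty; the arrival rate mu is shared evenly among the
   shortest queues, so such a state contributes exactly mu. *)

Lemma sum_indicator_pred1 (R : nzSemiRingType) (T : finType) (P : pred T)
    (x : T) (b : bool) (F : T -> R) :
  \sum_(y | P y) (b && (y == x))%:R * F y = (b && P x)%:R * F x.
Proof.
rewrite big_mkcond (bigD1 x) //= eqxx andbT big1 ?addr0 => [|y /negbTE ->].
  by case: (P x); rewrite ?andbT ?andbF ?mul0r.
by rewrite andbF mul0r; case: (P y).
Qed.

Lemma sum_ord_indicator (R : nzSemiRingType) (N a : nat) :
  \sum_(j < N) ((val j == a)%:R : R) = (a < N)%:R.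
Proof.
case: ltnP => [lt_aN | le_Na]; last first.
  by rewrite big1 // => j _; rewrite (ltn_eqF (leq_trans (ltn_ord j) le_Na)).
rewrite (bigD1 (Ordinal lt_aN)) //= eqxx big1 ?addr0 // => j.
by rewrite -val_eqE => /negbTE ->.
Qed.

Section Occupancy.
Variables k C : nat.
Implicit Types (n : state k C) (i : 'I_k) (f : 'I_C.+1 -> int).

Definition upd n i (w : 'I_C.+1) : state k C :=
  [ffun l => if l == i then w else n l].
Definition arrive n i := upd n i (inord (n i).+1).
Definition depart n i := upd n i (inord (n i).-1).

Lemma is_upd_arrive n n' i :
  is_upd n n' i 1 = (n i < C)%N && (n' == arrive n i).
Proof.
apply/forallP/andP => [upd_n' | [lt_niC /eqP ->] j].
- have /eqP upd_i := upd_n' i; rewrite eqxx in upd_i.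
  have lt_niC : (n i < C)%N by have := ltn_ord (n' i); lia.
  split=> //; apply/eqP/ffunP => j; rewrite ffunE; case: eqP => [-> | /eqP ne].
    by apply/val_inj; rewrite /= inordK //; lia.
  by apply/val_inj; move/eqP: (upd_n' j); rewrite (negbTE ne) /= addr0; lia.
- by rewrite ffunE; case: (j =P i) => [-> | _]; rewrite ?inordK ?addr0 //; apply/eqP; lia.
Qed.

Lemma is_upd_depart n n' i :
  is_upd n n' i (-1) = (0 < n i)%N && (n' == depart n i).
Proof.
have le_niC := ltn_ord (n i).
apply/forallP/andP => [upd_n' | [gt0_ni /eqP ->] j].
- have /eqP upd_i := upd_n' i; rewrite eqxx in upd_i.
  have gt0_ni : (0 < n i)%N by lia.
  split=> //; apply/eqP/ffunP => j; rewrite ffunE; case: eqP => [-> | /eqP ne].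
    by apply/val_inj; rewrite /= inordK //; lia.
  by apply/val_inj; move/eqP: (upd_n' j); rewrite (negbTE ne) /= addr0; lia.
- by rewrite ffunE; case: (j =P i) => [-> | _]; rewrite ?inordK ?addr0 //; apply/eqP; lia.
Qed.

Lemma occ_sum n : (\sum_l occ n l)%N = k.
Proof.
rewrite -[RHS]card_ord -sum1_card (partition_big (fun i => n i) predT) //=.
by apply: eq_bigr => l _; rewrite /occ -sum1_card; apply: eq_bigl => i; rewrite inE.
Qed.

Lemma sum_occ_mul (R : nzSemiRingType) n (G : 'I_C.+1 -> R) :
  \sum_i G (n i) = \sum_v (occ n v)%:R * G v.
Proof.
rewrite (partition_big (fun i => n i) predT) //=; apply: eq_bigr => v _.
rewrite (eq_bigr (fun _ => G v)) => [|i /eqP -> //].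
by rewrite sumr_const mulr_natl; congr (_ *+ _); apply: eq_card => i; rewrite inE.
Qed.

Lemma occ_upd n i w l :
  (occ (upd n i w) l + (n i == l) = occ n l + (w == l))%N.
Proof.
rewrite /occ (cardsD1 i [set j | upd n i w j == l]) (cardsD1 i [set j | n j == l]).
have -> : [set j | upd n i w j == l] :\ i = [set j | n j == l] :\ i.
  by apply/setP => j; rewrite !inE ffunE; case: eqP.
rewrite !inE ffunE eqxx; lia.
Qed.

Definition has_occ f n : bool := [forall j, (occ n j)%:Z == f j].

Definition move_occ f (a b : nat) : 'I_C.+1 -> int :=
  fun l => f l + (l == a :> nat)%:R - (l == b :> nat)%:R.

Lemma has_occ_upd f n i w :
  has_occ f (upd n i w) = has_occ (move_occ f (n i) w) n.
Proof.
apply: eq_forallb => l; have := occ_upd n i w l; rewrite /move_occ !val_eqE !(eq_sym l).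
by case: (n i == l); case: (w == l) => /= H; apply/eqP/eqP; lia.
Qed.

Lemma has_occ_arrive f n i :
  (n i < C)%N && has_occ f (arrive n i) =
  (n i < C)%N && has_occ (move_occ f (n i) (n i).+1) n.
Proof. by case: ltnP => //= lt_niC; rewrite has_occ_upd /move_occ /= inordK. Qed.

Lemma has_occ_depart f n i :
  has_occ f (depart n i) = has_occ (move_occ f (n i) (n i).-1) n.
Proof. by rewrite has_occ_upd /move_occ /= inordK // (leq_ltn_trans (leq_pred _)). Qed.

Lemma shortest_exists n (i0 : 'I_k) : exists i, shortest n i.
Proof.
case: (@arg_minnP _ i0 predT (fun i => nat_of_ord (n i))) => // i _ min_i.
by exists i; apply/forallP => j; apply: min_i.
Qed.

Lemma shortest_eq n i j : shortest n i -> shortest n j -> n i = n j.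
Proof.
move=> /forallP/(_ j) le_ij /forallP/(_ i) le_ji.
by apply/eqP; rewrite -val_eqE eqn_leq le_ij le_ji.
Qed.

Lemma occ_max_lt n : (occ n ord_max < k)%N = [exists i, (n i < C)%N].
Proof.
have := cardsC [set i | n i == ord_max]; rewrite card_ord /occ => split_k.
rewrite -[X in (_ < X)%N]split_k -[X in (X < _)%N]addn0 ltn_add2l card_gt0.
apply/set0Pn/existsP.
  by case=> i; rewrite !inE -val_eqE /= => ne_iC; exists i; have := ltn_ord (n i); lia.
by case=> i lt_iC; exists i; rewrite !inE -val_eqE /=; lia.
Qed.

Lemma card_nonempty n : #|[set i | (0 < n i)%N]| = (k - occ n ord0)%N.
Proof.
have := cardsC [set i | n i == ord0]; rewrite card_ord /occ => split_k.
by rewrite -[X in (X - _)%N]split_k addKn; apply: eq_card => i; rewrite !inE lt0n.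
Qed.

Lemma sum_has_occ f n : has_occ f n -> \sum_l f l = k%:Z.
Proof.
move=> /forallP occ_f; rewrite -(occ_sum n) -natz natr_sum.
by apply: eq_bigr => l _; rewrite natz; apply/esym/eqP/occ_f.
Qed.

Definition trunc_occ f (j : nat) : 'I_C.+1 -> int :=
  fun l => if (l < j)%N then 0 else f l.

Lemma has_occ_trunc f j n :
    (forall l : 'I_C.+1, (l < j)%N -> 0 <= f l) -> \sum_l f l = k%:Z ->
  has_occ (trunc_occ f j) n = [forall i, (j <= n i)%N] && has_occ f n.
Proof.
move=> f_ge0 sum_f; apply/idP/andP => [occ_t | [/forallP above /forallP occ_f]].
- have above i : (j <= n i)%N.
    rewrite leqNgt; apply/negP => lt_ij; move/forallP: occ_t => /(_ (n i)).
    by rewrite /trunc_occ lt_ij eqz_nat => /eqP/card0_eq/(_ i); rewrite !inE eqxx.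
  have low_f0 : \sum_(l : 'I_C.+1 | (l < j)%N) f l = 0.
    have : \sum_l f l = \sum_l trunc_occ f j l + \sum_(l : 'I_C.+1 | (l < j)%N) f l.
      rewrite [X in _ + X]big_mkcond -big_split /=; apply: eq_bigr => l _.
      by rewrite /trunc_occ; case: ifP; rewrite ?add0r ?addr0.
    by rewrite sum_f (sum_has_occ occ_t); lia.
  split; first exact/forallP.
  apply/forallP => l; move/forallP: occ_t => /(_ l); rewrite /trunc_occ.
  by case: ifP => // lt_lj; rewrite (psumr_eq0P f_ge0 low_f0).
- apply/forallP => l; have := occ_f l; rewrite /trunc_occ.
  case: ifP => // lt_lj _; rewrite eqz_nat cards_eq0; apply/eqP/setP => i.
  rewrite !inE; apply/negbTE/eqP => n_i; have := above i; rewrite n_i.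
  by move: lt_lj => /=; lia.
Qed.

Lemma sum_move_occ f (a b : nat) : (a <= C)%N -> (b <= C)%N ->
  \sum_l move_occ f a b l = \sum_l f l.
Proof.
move=> le_aC le_bC; rewrite /move_occ sumrB big_split /=.
by rewrite !sum_ord_indicator !ltnS le_aC le_bC addrK.
Qed.

Lemma has_occ_move_level f (a b : nat) n :
    has_occ (move_occ f a b) n -> (a <= C)%N -> a != b -> 0 <= f (inord a) ->
  exists i, nat_of_ord (n i) = a.
Proof.
move=> /forallP/(_ (inord a))/eqP + le_aC ne_ab f_ge0.
rewrite /move_occ inordK // eqxx (negbTE ne_ab) => occ_a.
have /card_gt0P[i] : (0 < occ n (inord a))%N by move: occ_a f_ge0 => /=; lia.
by rewrite inE => /eqP n_i; exists i; rewrite n_i inordK.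
Qed.

Lemma arrival_profileE (m : 'I_C.+1 -> nat) (j : nat) (l : 'I_C.+1) :
  trunc_occ (move_occ (fun l => (m l)%:Z) j j.+1) j l =
  if (l < j)%N then 0 else if val l == j then (m l)%:Z + 1
  else if val l == j.+1 then (m l)%:Z - 1 else (m l)%:Z.
Proof.
rewrite /trunc_occ /move_occ; case: ltnP => // _.
case: eqP => [-> | _]; first by rewrite ltn_eqF //= subr0.
by case: eqP => _; rewrite /= ?addr0 ?subr0.
Qed.

End Occupancy.

Section Rates.
Variables (R : numFieldType) (k C : nat) (mu lam : R).
Implicit Types (n : state k C) (i : 'I_k).

Definition arrival_rate n i : R :=
  if shortest n i && (n i < C)%N then mu / (nshort n)%:R else 0.

Lemma rateE n n' :
  rate mu lam n n' =
  \sum_i (((n i < C)%N && (n' == arrive n i))%:R * arrival_rate n i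
          + ((0 < n i)%N && (n' == depart n i))%:R * lam).
Proof. by apply: eq_bigr => i _; rewrite is_upd_arrive is_upd_depart. Qed.

Lemma rate_id n : rate mu lam n n = 0.
Proof.
rewrite /rate big1 // => i _.
have not_upd d : d != 0 -> is_upd n n i d = false.
  by move=> nz_d; apply/negP => /forallP/(_ i); rewrite eqxx => /eqP; lia.
by rewrite !not_upd // !mul0r addr0.
Qed.

Lemma sum_arrival_rate n i1 (x : nat -> R) : shortest n i1 ->
  \sum_i x (n i) * arrival_rate n i = x (n i1) * ((n i1 < C)%N)%:R * mu.
Proof.
move=> short_i1; have nshort_gt0 : (0 < nshort n)%N.
  by apply/card_gt0P; exists i1; rewrite inE.
rewrite (bigID (shortest n)) /= [X in _ + X]big1 ?addr0 => [|i /negbTE];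
  last by rewrite /arrival_rate => ->; rewrite mulr0.
under eq_bigr => i short_i do
  rewrite /arrival_rate short_i (shortest_eq short_i short_i1) /=.
rewrite -mulrA -big_distrr /=; congr (_ * _).
case: (n i1 < C)%N; last by rewrite mul0r big1.
rewrite [RHS]mul1r (eq_bigl (fun i => i \in [set i | shortest n i])) => [|i].
  by rewrite sumr_const -[_ *+ #|_|]mulr_natr divfK // pnatr_eq0 -lt0n.
by rewrite inE.
Qed.

Lemma exit_rate n :
  \sum_n' rate mu lam n n' =
  ((occ n ord_max < k)%N)%:R * mu + (k - occ n ord0)%:R * lam.
Proof.
under eq_bigr do rewrite rateE.
rewrite exchange_big /=.
under eq_bigr do rewrite big_split /= !sum_indicator_pred1 !andbT.
rewrite big_split /= occ_max_lt; congr (_ + _).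
- case: (boolP [exists i, (n i < C)%N]) => [/existsP[i0 lt_i0C] | /existsPn full].
    have [i1 short_i1] := shortest_exists n i0.
    have lt_i1C : (n i1 < C)%N by move/forallP: short_i1 => /(_ i0); lia.
    by rewrite (sum_arrival_rate (fun a => (a < C)%:R) short_i1) lt_i1C !mul1r.
  by rewrite big1 ?mul0r // => i _; rewrite (negbTE (full i)) mul0r.
- rewrite -big_distrl /= -card_nonempty -sum1_card natr_sum; congr (_ * _).
  by rewrite [RHS]big_mkcond; apply: eq_bigr => i _; rewrite inE; case: (0 < n i)%N.
Qed.
End Rates.

Section Inflow.
Variables (R : numFieldType) (k C : nat) (mu lam : R) (m : 'I_C.+1 -> nat).
Hypothesis sum_m : (\sum_l m l)%N = k.
Local Notation M := (fun l : 'I_C.+1 => (m l)%:Z).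
Implicit Types (n : state k C).

Lemma departures_into n' :
  \sum_i ((0 < n' i)%N && has_occ M (depart n' i))%:R * lam =
  \sum_(v | v != ord0)
     ((m v).+1%:R * lam) * (has_occ (move_occ M v (val v).-1) n')%:R.
Proof.
under eq_bigr do rewrite has_occ_depart.
rewrite (sum_occ_mul n'
  (fun v => ((0 < v)%N && has_occ (move_occ M v (val v).-1) n')%:R * lam)).
rewrite [RHS]big_mkcond; apply: eq_bigr => v _.
case: (eqVneq v ord0) => [-> | nz_v] /=; first by rewrite mul0r mulr0.
have gt0_v : (0 < v)%N by move: nz_v; rewrite -val_eqE lt0n.
rewrite gt0_v; case occ_v: (has_occ _ n'); last by rewrite !(mul0r, mulr0).
move/forallP: occ_v => /(_ v)/eqP; rewrite /move_occ eqxx gtn_eqF ?ltn_predL //.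
by move=> /= occ_v; rewrite mul1r mulr1; congr (_%:R * _); lia.
Qed.

Lemma arrivals_into n' :
  \sum_i ((n' i < C)%N && has_occ M (arrive n' i))%:R * arrival_rate mu n' i =
  \sum_(j < C) mu * (has_occ (trunc_occ (move_occ M j j.+1) j) n')%:R.
Proof.
have level j : has_occ (move_occ M j j.+1) n' -> (j <= C)%N ->
    exists i, nat_of_ord (n' i) = j.
  by move=> occ_j le_jC; apply: has_occ_move_level occ_j le_jC _ _; rewrite ?ltn_eqF.
have trunc (j : 'I_C) : has_occ (trunc_occ (move_occ M j j.+1) j) n' =
    [forall i, (j <= n' i)%N] && has_occ (move_occ M j j.+1) n'.
  apply: has_occ_trunc => [l lt_lj | ].
    rewrite /move_occ (ltn_eqF lt_lj) (ltn_eqF (ltnW lt_lj : l < j.+1)%N).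
    by rewrite /= subr0 addr0.
  rewrite sum_move_occ ?(ltnW (ltn_ord j)) // -sum_m -natz natr_sum.
  by apply: eq_bigr => l _; rewrite natz.
under [in LHS]eq_bigr do rewrite has_occ_arrive.
under [in RHS]eq_bigr do rewrite trunc.
case: (pickP (@predT 'I_k)) => [i0 _ | no_queue]; last first.
  rewrite big1 => [|i]; last by have := no_queue i.
  rewrite big1 // => j _; rewrite mulr_natr; case: andP => [[_ /level[|i _]] | _] //.
    exact: ltnW.
  by have := no_queue i.
have [i1 short_i1] := shortest_exists n' i0.
set P := has_occ (move_occ M (n' i1) (n' i1).+1) n'.
have at_min (j : 'I_C) :
    [forall i, (j <= n' i)%N] && has_occ (move_occ M j j.+1) n' =
    (j == n' i1 :> nat) && P.
  apply/andP/andP => [[/forallP above occ_j] | [/eqP j_min occ_min]].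
    have [i n_i] := level j occ_j (ltnW (ltn_ord j)).
    have j_min : nat_of_ord j = n' i1.
      by have := above i1; move/forallP: short_i1 => /(_ i); lia.
    by split; [rewrite j_min | rewrite /P -j_min].
  split; last by rewrite j_min.
  by apply/forallP => i; rewrite j_min; apply: (forallP short_i1).
pose x a := ((a < C)%N && has_occ (move_occ M a a.+1) n')%:R : R.
rewrite (sum_arrival_rate mu x short_i1) /x.
under eq_bigr do rewrite at_min -mulnb natrM.
rewrite -big_distrr -big_distrl /= sum_ord_indicator -/P.
by clear at_min; case: (n' i1 < C)%N; case: P; rewrite /= ?(mul0r, mulr0, mul1r, mulr1).
Qed.

Lemma rate_into_occ n' :
  \sum_(n | has_occ M n) rate mu lam n' n =
  \sum_(j < C) mu * (has_occ (trunc_occ (move_occ M j j.+1) j) n')%:R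
  + \sum_(v | v != ord0)
       ((m v).+1%:R * lam) * (has_occ (move_occ M v (val v).-1) n')%:R.
Proof.
under [in LHS]eq_bigr do rewrite rateE.
rewrite exchange_big /=.
under [in LHS]eq_bigr do rewrite big_split /= !sum_indicator_pred1.
by rewrite big_split /= arrivals_into departures_into.
Qed.

End Inflow.

Section Zeta.
Variables (R : numFieldType) (k C : nat) (eps : state k C -> R).
Implicit Types (f : 'I_C.+1 -> int).

Lemma zetaE f : zeta eps f = \sum_n eps n * (has_occ f n)%:R.
Proof.
rewrite /zeta big_mkcond; apply: eq_bigr => n _.
by rewrite /has_occ; case: ifP; rewrite ?(mulr1, mulr0).
Qed.

Lemma eq_zeta f g : f =1 g -> zeta eps f = zeta eps g.
Proof. by move=> fg; apply: eq_bigl => n; apply: eq_forallb => j; rewrite fg. Qed.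

Lemma stationary_class_balance (mu lam : R) f :
  jsq_stationary mu lam eps ->
  \sum_(n | has_occ f n) eps n * \sum_n' rate mu lam n n' =
  \sum_n' eps n' * \sum_(n | has_occ f n) rate mu lam n' n.
Proof.
move=> [_ [_ balance]].
have rm_self n (F : state k C -> R) :
    F n = 0 -> \sum_(n' | n' != n) F n' = \sum_n' F n'.
  by move=> Fn0; apply: big_rmcond => n'; rewrite negbK => /eqP ->.
under eq_bigr => n _ do
  rewrite -(rm_self n) ?rate_id // balance (rm_self n) ?rate_id ?mulr0 //.
by rewrite exchange_big /=; apply: eq_bigr => n' _; rewrite big_distrr.
Qed.

Lemma sum_zeta (I : finType) (P : pred I) (c : I -> R) (f : I -> 'I_C.+1 -> int) :
  \sum_n eps n * \sum_(i | P i) c i * (has_occ (f i) n)%:R =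
  \sum_(i | P i) c i * zeta eps (f i).
Proof.
under [RHS]eq_bigr do rewrite zetaE big_distrr.
rewrite exchange_big; apply: eq_bigr => n _ /=.
by rewrite big_distrr; apply: eq_bigr => i _; rewrite mulrCA.
Qed.

End Zeta.

Theorem lemma4 (R : realFieldType) (k C : nat) (mu lam : R)
    (eps : state k C -> R) :
  0 < mu -> 0 < lam -> jsq_stationary mu lam eps ->
  forall m : 'I_C.+1 -> nat, (\sum_(j < C.+1) m j)%N = k ->
  (((m ord_max < k)%N)%:R * (mu / lam) + (k - m ord0)%:R)
      * zeta eps (fun j => (m j)%:Z)
  = \sum_(i < C.+1 | i != ord0)
        (m i).+1%:R *
        zeta eps (fun j => (m j)%:Z + (j == i)%:R - (val j == (val i).-1)%:R)
    + (mu / lam) *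
      \sum_(j < C)
        zeta eps (fun l => if (val l < j)%N then 0
                           else if val l == val j then (m l)%:Z + 1
                           else if val l == j.+1 then (m l)%:Z - 1
                           else (m l)%:Z).
Proof.
move=> _ lam_gt0 stationary m sum_m; have lam_neq0 : lam != 0 by rewrite gt_eqF.
set M := fun j : 'I_C.+1 => (m j)%:Z.
have outflow : \sum_(n | has_occ M n) eps n * \sum_n' rate mu lam n n' =
    (((m ord_max < k)%N)%:R * mu + (k - m ord0)%:R * lam) * zeta eps M.
  rewrite /zeta big_distrr /=; apply: eq_bigr => n /forallP occ_n.
  have occ_m j : occ n j = m j by apply/eqP; rewrite -eqz_nat; apply: occ_n.
  by rewrite exit_rate !occ_m mulrC.
have inflow : \sum_n' eps n' * \sum_(n | has_occ M n) rate mu lam n' n =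
    \sum_(j < C) mu * zeta eps (trunc_occ (move_occ M j j.+1) j)
    + \sum_(v | v != ord0) ((m v).+1%:R * lam) * zeta eps (move_occ M v (val v).-1).
  under eq_bigr do rewrite rate_into_occ // mulrDr.
  by rewrite big_split /= !sum_zeta.
apply: (mulfI lam_neq0).
have -> : forall b c z : R, lam * ((b * (mu / lam) + c) * z) = (b * mu + c * lam) * z.
  by move=> b c z; field.
rewrite -outflow stationary_class_balance // inflow -big_distrr /=.
under [X in _ + X = _]eq_bigr do rewrite mulrAC.
rewrite -big_distrl /= mulrDr mulrA [lam * (mu / lam)]mulrCA divff // mulr1.
rewrite addrC mulrC; congr (_ + _).
by congr (_ * _); apply: eq_bigr => j _; apply: eq_zeta => l; rewrite arrival_profileE.
Qed.
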